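(* Let $(\mathcal{S}_1,\mathcal{S}_2)$ be an $S$-pair, let $A \subseteq S$, $x \in A$, $i \in \{1,2\}$, and let $j \ge 2$ be an integer with $j \le |A|$. Suppose every $j$-element subset of $A$ containing $x$ lies in $\mathcal{S}_i$. Then every $j$-element subset of $A$ lies in $\mathcal{S}_i$, and $A \in \mathcal{S}_i$.
   Context: Let $S$ be a finite nonempty set and $\mathcal{S}_1, \mathcal{S}_2 \subseteq 2^S$. The pair $(\mathcal{S}_1,\mathcal{S}_2)$ is an $S$-pair if: (S1) for $i=1,2$, if $A,B \in \mathcal{S}_i$ with $B \subset A$ and $|A| = |B|+1$, then every $|B|$-element subset of $A$ lies in $\mathcal{S}_i$; (S2) for $i=1,2$, if $A,B \in \mathcal{S}_i$ with $|A|=|B|$ and $|A\cap B| = |A|-1$, then $A\cup B \in \mathcal{S}_i$; (S3) for $i=1,2$, not every singleton $\{s\}$, $s\in S$, lies in $\mathcal{S}_i$, and $S \notin \mathcal{S}_i$; (S4) for $k = 1,\dots,|S|-1$ and $x\in S$, if every $k$-element subset of $S - x$ lies in $\mathcal{S}_1$, then not every $(|S|-k)$-element subset of $S-x$ lies in $\mathcal{S}_2$. *)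

From mathcomp Require Import all_boot.
Set Implicit Arguments. Unset Strict Implicit. Unset Printing Implicit Defensive.

(* The ground set S is the whole finite type T (nonempty: 0 < #|T|);
   families of subsets of S are elements of {set {set T}}. *)

Definition condS1 (T : finType) (F : {set {set T}}) : Prop :=
  forall A B : {set T}, A \in F -> B \in F -> B \proper A -> #|A| = #|B| + 1 ->
    forall C : {set T}, C \subset A -> #|C| = #|B| -> C \in F.

Definition condS2 (T : finType) (F : {set {set T}}) : Prop :=
  forall A B : {set T}, A \in F -> B \in F -> #|A| = #|B| ->
    #|A :&: B| = #|A| - 1 -> A :|: B \in F.

Definition condS3 (T : finType) (F : {set {set T}}) : Prop :=
  ~ (forall s : T, [set s] \in F) /\ [set: T] \notin F.

Definition condS4 (T : finType) (F1 F2 : {set {set T}}) : Prop :=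
  forall (k : nat) (x : T), 1 <= k <= #|T| - 1 ->
    (forall C : {set T}, C \subset [set: T] :\ x -> #|C| = k -> C \in F1) ->
    ~ (forall C : {set T}, C \subset [set: T] :\ x -> #|C| = #|T| - k -> C \in F2).

Definition S_pair (T : finType) (F1 F2 : {set {set T}}) : Prop :=
  [/\ condS1 F1 /\ condS1 F2, condS2 F1 /\ condS2 F2,
      condS3 F1 /\ condS3 F2 & condS4 F1 F2].

Definition Ssel (T : finType) (F1 F2 : {set {set T}}) (i : nat) : {set {set T}} :=
  if i == 1 then F1 else F2.

From mathcomp Require Import all_boot.
From mathcomp Require Import zify.

Set Implicit Arguments.
Unset Strict Implicit.
Unset Printing Implicit Defensive.

(* Only the axioms (S1) and (S2) of the family S_i are used.
   - Gluing ([glue_setD1]): by (S2), if D minus c1 and D minus c2 both lie in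
     a family F, for distinct c1, c2 in D, then D lies in F.
   - Spreading ([spread_from_point]): given a j-subset B of A avoiding x,
     pick distinct b1, b2 in B (here j >= 2 is needed).  The sets
     (x |: B) minus b1 and (x |: B) minus b2 are j-subsets of A containing x,
     so they lie in F and glue to x |: B; then (S1), applied to x |: B and
     its member (x |: B) minus b1, puts the j-subset B in F.
   - Upward closure ([subsets_upward]): once all k-subsets of A (k >= 1) are
     in F, gluing shows by induction that every subset of A with at least k
     elements is in F, in particular A itself. *)

Lemma glue_setD1 (T : finType) (F : {set {set T}}) (D : {set T}) (c1 c2 : T) :
  condS2 F -> c1 \in D -> c2 \in D -> c1 != c2 ->
  D :\ c1 \in F -> D :\ c2 \in F -> D \in F.
Proof.
move=> S2 Dc1 Dc2 c12 FDc1 FDc2.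
have union_eq : (D :\ c1) :|: (D :\ c2) = D.
  apply/setP=> y; rewrite !inE.
  case: (y \in D); rewrite ?andbF ?andbT //=.
  by case: (y =P c1) => // ->.
have inter_eq : (D :\ c1) :&: (D :\ c2) = (D :\ c1) :\ c2.
  apply/setP=> y; rewrite !inE.
  by case: (y == c1); case: (y == c2); case: (y \in D).
have Dc1c2 : c2 \in D :\ c1 by rewrite !inE Dc2 eq_sym c12.
have := cardsD1 c1 D; have := cardsD1 c2 D; have := cardsD1 c2 (D :\ c1).
rewrite Dc1 Dc2 Dc1c2 => k3 k2 k1.
rewrite -union_eq; apply: S2 => //; first lia.
by rewrite inter_eq; lia.
Qed.

Lemma subsets_upward (T : finType) (F : {set {set T}}) (A : {set T}) (k : nat) :
  condS2 F -> 0 < k ->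
  (forall B : {set T}, B \subset A -> #|B| = k -> B \in F) ->
  forall B : {set T}, B \subset A -> k <= #|B| -> B \in F.
Proof.
move=> S2 k_gt0 Hk B; have [n] := ubnP #|B|.
elim: n B => // n IH B cardB_lt BA k_le_B.
have [cardBk|cardBNk] := eqVneq #|B| k; first exact: Hk.
have : 1 < #|B| by lia.
case/card_gt1P=> [c1 [c2 [Bc1 Bc2 c12]]].
have := cardsD1 c1 B; have := cardsD1 c2 B; rewrite Bc1 Bc2 => cardBc2 cardBc1.
apply: (glue_setD1 S2 Bc1 Bc2 c12); apply: IH;
  by [lia | exact: subset_trans (subsetDl _ _) BA].
Qed.

Lemma spread_from_point (T : finType) (F : {set {set T}}) (A : {set T})
    (x : T) (j : nat) :
  condS1 F -> condS2 F -> x \in A -> 2 <= j ->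
  (forall B : {set T}, B \subset A -> #|B| = j -> x \in B -> B \in F) ->
  forall B : {set T}, B \subset A -> #|B| = j -> B \in F.
Proof.
move=> S1 S2 Ax j_ge2 Hx B BA cardB.
have [xB|xNB] := boolP (x \in B); first exact: Hx.
have : 1 < #|B| by rewrite cardB.
case/card_gt1P=> [b1 [b2 [Bb1 Bb2 b12]]].
set D := x |: B.
have DA : D \subset A by rewrite subUset sub1set Ax BA.
have cardD : #|D| = j + 1 by rewrite cardsU1 xNB cardB addnC.
have Db1 : b1 \in D by rewrite !inE Bb1 orbT.
have Db2 : b2 \in D by rewrite !inE Bb2 orbT.
(* Removing b from D leaves a j-subset of A through x, hence a member of F. *)
have FDb b : b \in B -> D :\ b \in F.
  move=> Bb; have xb : x != b by apply: contraNneq xNB => ->.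
  have Db : b \in D by rewrite !inE Bb orbT.
  have := cardsD1 b D; rewrite Db => cDb.
  apply: Hx; [exact: subset_trans (subsetDl _ _) DA | lia | by rewrite !inE xb eqxx].
have FD : D \in F := glue_setD1 S2 Db1 Db2 b12 (FDb _ Bb1) (FDb _ Bb2).
have := cardsD1 b1 D; rewrite Db1 => cDb1.
apply: (S1 D (D :\ b1)) => //; [exact: FDb | by rewrite properD1 | lia |
  exact: subsetUr | lia].
Qed.

Theorem mainTheorem7 (T : finType) (F1 F2 : {set {set T}}) (A : {set T}) (x : T)
    (i j : nat) :
  0 < #|T| -> S_pair F1 F2 ->
  x \in A -> (i = 1 \/ i = 2) -> 2 <= j -> j <= #|A| ->
  (forall B : {set T}, B \subset A -> #|B| = j -> x \in B -> B \in Ssel F1 F2 i) ->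
  (forall B : {set T}, B \subset A -> #|B| = j -> B \in Ssel F1 F2 i) /\
  A \in Ssel F1 F2 i.
Proof.
move=> _ [[S11 S12] [S21 S22] _ _] Ax _ j_ge2 jA Hx.
have S1 : condS1 (Ssel F1 F2 i) by rewrite /Ssel; case: (i == 1).
have S2 : condS2 (Ssel F1 F2 i) by rewrite /Ssel; case: (i == 1).
have Hj := spread_from_point S1 S2 Ax j_ge2 Hx.
split=> //; apply: (subsets_upward S2 _ Hj) => //; lia.
Qed.
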